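(* Let $n>k+\ell$, and let $\mathcal F\subset\binom{[n]}{k}$, $\mathcal G\subset\binom{[n]}{\ell}$ be non-trivial cross-intersecting families forming a saturated pair, shifted ad extremis with respect to $\tau(\mathcal F)\ge2$, and not both initial. If the 2-cover graph $\hat{\mathcal H}$ of $\mathcal F$ is triangle-free, then there are disjoint sets $X,Y\subset[n]$ with $X\cup Y=[|X|+|Y|]$, $2\le|X|\le k$, $2\le|Y|\le k$, such that the edge set of $\hat{\mathcal H}$ is exactly $\{\{x,y\}:x\in X,y\in Y\}$.
   Context: Non-trivial: nonempty and not a star (a star is a family whose members share a common element). Cross-intersecting: $F\cap G\ne\emptyset$ for all $F\in\mathcal F,G\in\mathcal G$; saturated pair: adding any further $k$-set to $\mathcal F$ or $\ell$-set to $\mathcal G$ destroys cross-intersection. Shifting: for $i<j$, $S_{ij}(F)=(F\setminus\{j\})\cup\{i\}$ if $j\in F$, $i\notin F$, $(F\setminus\{j\})\cup\{i\}\notin\mathcal F$, else $S_{ij}(F)=F$; $S_{ij}(\mathcal F)=\{S_{ij}(F):F\in\mathcal F\}$. Shifted ad extremis with respect to $\tau(\mathcal F)\ge2$: for every $1\le i<j\le n$, either $S_{ij}(\mathcal F)=\mathcal F$ and $S_{ij}(\mathcal G)=\mathcal G$, or $S_{ij}(\mathcal F)$ is a star. Initial: with $(a_1,\dots,a_k)\prec(b_1,\dots,b_k)$ iff $a_i\le b_i$ for all $i$, a family is initial if $A\prec B\in\mathcal F$ implies $A\in\mathcal F$. The 2-cover graph $\hat{\mathcal H}$ has vertex set $[n]$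 and edges $\{i,j\}$ such that every $F\in\mathcal F$ meets $\{i,j\}$. *)

From mathcomp Require Import all_boot.
Set Implicit Arguments. Unset Strict Implicit. Unset Printing Implicit Defensive.

(* Ground set [n] is modelled by 'I_n = {0,...,n-1} (shift by one). *)

Definition uniformly (n k : nat) (F : {set {set 'I_n}}) : Prop :=
  forall A, A \in F -> #|A| = k.

Definition is_star (n : nat) (F : {set {set 'I_n}}) : Prop :=
  exists x : 'I_n, forall A, A \in F -> x \in A.

Definition nontrivial (n : nat) (F : {set {set 'I_n}}) : Prop :=
  F != set0 /\ ~ is_star F.

Definition cross_intersecting (n : nat) (F G : {set {set 'I_n}}) : Prop :=
  forall A B, A \in F -> B \in G -> A :&: B != set0.

Definition saturated_pair (n k l : nat) (F G : {set {set 'I_n}}) : Prop :=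
  (forall A : {set 'I_n}, #|A| = k -> A \notin F ->
     exists2 B, B \in G & A :&: B = set0) /\
  (forall B : {set 'I_n}, #|B| = l -> B \notin G ->
     exists2 A, A \in F & A :&: B = set0).

Definition shift_set (n : nat) (i j : 'I_n) (F : {set {set 'I_n}})
  (A : {set 'I_n}) : {set 'I_n} :=
  if [&& j \in A, i \notin A & (i |: (A :\ j)) \notin F]
  then i |: (A :\ j) else A.

Definition shift_fam (n : nat) (i j : 'I_n) (F : {set {set 'I_n}})
  : {set {set 'I_n}} :=
  [set shift_set i j F A | A in F].

Definition shifted_ad_extremis (n : nat) (F G : {set {set 'I_n}}) : Prop :=
  forall i j : 'I_n, i < j ->
    (shift_fam i j F = F /\ shift_fam i j G = G) \/ is_star (shift_fam i j F).

Definition sorted_elems (n : nat) (A : {set 'I_n}) : seq nat :=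
  sort leq [seq val x | x <- enum A].

Definition shift_prec (n : nat) (A B : {set 'I_n}) : Prop :=
  #|A| = #|B| /\
  forall t, t < #|A| -> nth 0 (sorted_elems A) t <= nth 0 (sorted_elems B) t.

Definition initial (n : nat) (F : {set {set 'I_n}}) : Prop :=
  forall A B : {set 'I_n}, shift_prec A B -> B \in F -> A \in F.

Definition cover2_edge (n : nat) (F : {set {set 'I_n}}) (i j : 'I_n) : bool :=
  (i != j) && [forall A in F, (i \in A) || (j \in A)].

Definition triangle_free (n : nat) (F : {set {set 'I_n}}) : Prop :=
  ~ exists a b c : 'I_n,
      [/\ cover2_edge F a b, cover2_edge F b c & cover2_edge F a c].

From mathcomp Require Import all_boot.
Set Implicit Arguments. Unset Strict Implicit. Unset Printing Implicit Defensive.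

(* If S_uv (u < v) moved F to a star, the star would have to be centred at u,
   so {u, v} would cover F; hence S_uv fixes F whenever {u, v} is a non-edge of
   the 2-cover graph.  Shifting down along non-edges only enlarges
   neighbourhoods, and together with triangle-freeness this makes the
   non-isolated vertices, for an edge {a, b} produced by a star-making shift
   S_ab, the complete bipartite pair N(b), N(a); this vertex set is closed
   downwards, i.e. an initial segment.  Each neighbourhood has at most k
   elements because some member of F avoids the vertex.  If the segment had at
   most k + 1 elements, F would be closed under every shift into [0, k], so it
   would contain [0, k] minus a and [0, k] minus b; but then S_ab fixes
   [0, k] minus a, which avoids a, although S_ab(F) is a star centred at a. *)

Lemma count_lt_pointwise_le (y : nat) (s1 s2 : seq nat) : size s1 = size s2 ->
  (forall t, t < size s1 -> nth 0 s1 t <= nth 0 s2 t) ->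
  count (fun x => x < y) s2 <= count (fun x => x < y) s1.
Proof.
elim: s1 s2 => [|a s1 IHs] [|b s2] //= [size_s] le_s.
apply: leq_add; last by apply: IHs => // t; apply: (le_s t.+1).
have /= le_ab := le_s 0 isT.
by case: (ltnP b y) => // lt_by; rewrite (leq_ltn_trans le_ab lt_by).
Qed.

Section Shifting.
Variable n : nat.
Implicit Types (F : {set {set 'I_n}}) (A B T : {set 'I_n}).

Lemma card_prefix (m : nat) : m <= n -> #|[set w : 'I_n | w < m]| = m.
Proof.
elim: m => [|m IHm] lt_mn.
  by apply/eqP; rewrite cards_eq0; apply/eqP/setP=> w; rewrite !inE.
have -> : [set w : 'I_n | w < m.+1] = Ordinal lt_mn |: [set w : 'I_n | w < m].
  by apply/setP=> w; rewrite !inE ltnS leq_eqVlt -val_eqE.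
by rewrite cardsU1 inE ltnn IHm // ltnW.
Qed.

Lemma downward_closed_prefix (S : {set 'I_n}) :
  (forall i j : 'I_n, j \in S -> i < j -> i \in S) ->
  S = [set i : 'I_n | i < #|S|].
Proof.
move=> S_down; apply/setP=> i; rewrite inE; apply/idP/idP=> Si.
  have : [set w : 'I_n | w < i.+1] \subset S.
    apply/subsetP=> w; rewrite inE ltnS leq_eqVlt => /orP[/eqP/val_inj-> //|].
    exact: S_down Si.
  by move/subset_leq_card; rewrite card_prefix.
apply/negPn/negP=> S'i.
have sub : S \subset [set w : 'I_n | w < i].
  apply/subsetP=> w Sw; rewrite inE ltnNge leq_eqVlt.
  apply/negP=> /orP[/eqP/val_inj eq_iw|lt_iw].
    by rewrite eq_iw Sw in S'i.
  by rewrite (S_down i w Sw lt_iw) in S'i.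
by have := subset_leq_card sub; rewrite card_prefix ?(ltnW (ltn_ord i)) // leqNgt Si.
Qed.

Lemma shift_fam_fixed_mem F (i j : 'I_n) : shift_fam i j F = F ->
  forall A, A \in F -> j \in A -> i \notin A -> i |: (A :\ j) \in F.
Proof.
move=> fixF A FA jA iA; apply/negPn/negP=> F'A.
have : shift_set i j F A \in F by rewrite -{2}fixF; apply: imset_f.
by rewrite /shift_set jA iA F'A /= (negbTE F'A).
Qed.

Lemma star_shift_center F (i j : 'I_n) :
  ~ is_star F -> is_star (shift_fam i j F) ->
  forall A, A \in F -> i \in shift_set i j F A.
Proof.
move=> nstarF [x xS].
have {}xS A : A \in F -> x \in shift_set i j F A by move=> FA; apply: xS; apply: imset_f.
suff eq_xi : x = i by move=> A FA; rewrite -{1}eq_xi; exact: xS.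
apply/eqP/negPn/negP=> x'i; apply: nstarF; exists x => A FA.
move: (xS A FA); rewrite /shift_set; case: ifP => // _.
by rewrite !inE (negbTE x'i) => /andP[].
Qed.

Lemma star_shift_edge F (i j : 'I_n) : i != j ->
  ~ is_star F -> is_star (shift_fam i j F) -> cover2_edge F i j.
Proof.
move=> i'j nstarF starS; rewrite /cover2_edge i'j; apply/forall_inP=> A FA.
move: (star_shift_center nstarF starS FA); rewrite /shift_set.
by case: ifP=> [/andP[-> _]|_ ->]; rewrite ?orbT.
Qed.

Definition shift_closed_on F T :=
  forall u v : 'I_n, u < v -> v \in T ->
  forall A, A \in F -> v \in A -> u \notin A -> u |: (A :\ v) \in F.

Definition card_below A (y : nat) := #|[set w in A | w < y]|.

Lemma lower_exchange A B (v : 'I_n) :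
  (forall y, card_below B y <= card_below A y) ->
  v \in B :\: A -> (forall w, w \in B :\: A -> v <= w) ->
  exists2 u : 'I_n, u \in A :\: B & u < v.
Proof.
move=> lowAB vBA v_min; have [vB vA] := setDP vBA.
case: (boolP [exists u : 'I_n, (u \in A :\: B) && (u < v)]).
  by move=> /existsP[u /andP[]]; exists u.
rewrite negb_exists => /forallP noU; exfalso.
have sub : [set w in A | w < v.+1] \subset [set w in B | w < v].
  apply/subsetP=> w; rewrite !inE ltnS leq_eqVlt => /andP[Aw].
  case/orP=> [/eqP/val_inj eq_wv|lt_wv]; first by move: vA; rewrite -eq_wv Aw.
  by have := noU w; rewrite inE Aw lt_wv !andbT negbK => ->.
have proper : [set w in B | w < v] \proper [set w in B | w < v.+1].
  apply/properP; split; last by exists v; rewrite !inE ?vB ?ltnSn // ltnn.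
  by apply/subsetP=> w; rewrite !inE => /andP[-> /ltnW].
have := leq_trans (proper_card proper) (lowAB v.+1).
by rewrite ltnNge (subset_leq_card sub).
Qed.

Lemma lower_exchange_below A B (u v : 'I_n) :
  (forall y, card_below B y <= card_below A y) ->
  u \in A -> u < v -> v \in B -> (forall w, w \in B -> w < v -> w \in A) ->
  forall y, card_below (u |: (B :\ v)) y <= card_below A y.
Proof.
move=> lowAB Au lt_uv Bv B_lt_v y; rewrite /card_below.
have [le_yu|lt_uy] := leqP y u.
  apply: leq_trans (lowAB y); apply: subset_leq_card; apply/subsetP=> w.
  rewrite !inE => /andP[/orP[/eqP->|/andP[_ ->]] // lt_wy].
  by move: (leq_trans lt_wy le_yu); rewrite ltnn.
have [le_yv|lt_vy] := leqP y v.
  apply: subset_leq_card; apply/subsetP=> w.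
  rewrite !inE => /andP[/orP[/eqP->|/andP[_ Bw]] lt_wy]; first by rewrite Au.
  by rewrite lt_wy B_lt_v // (leq_trans lt_wy le_yv).
apply: leq_trans (lowAB y).
have sub : [set w in u |: (B :\ v) | w < y] \subset u |: ([set w in B | w < y] :\ v).
  apply/subsetP=> w; rewrite !inE => /andP[/orP[->|/andP[-> ->]] ->] //.
  by rewrite orbT.
apply: (leq_trans (subset_leq_card sub)).
rewrite /card_below (cardsD1 v [set w in B | w < y]) inE Bv lt_vy.
by rewrite cardsU1 leq_add2r leq_b1.
Qed.

(* Induction on |B :\: A|: the least element v of B :\: A can be replaced by
   some u < v of A :\: B, and u |: (B :\ v) still lies above A. *)
Lemma shift_closed_lower F T A B :
  shift_closed_on F T -> #|A| = #|B| -> B :\: A \subset T ->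
  (forall y, card_below B y <= card_below A y) -> B \in F -> A \in F.
Proof.
move=> closedF; have [d] := ubnP #|B :\: A|; elim: d B => // d IHd B.
rewrite ltnS => le_BA_d card_AB sub_T lowAB FB.
have [BA0|[v0 v0BA]] := set_0Vmem (B :\: A).
  suff -> : A = B by [].
  by apply/eqP; rewrite eq_sym eqEcard -setD_eq0 BA0 eqxx card_AB leqnn.
pose v := [arg min_(w < v0 in B :\: A) val w].
have [vBA v_min] : v \in B :\: A /\ forall w, w \in B :\: A -> v <= w.
  by rewrite /v; case: arg_minnP.
have [Bv A'v] := setDP vBA.
have B_lt_v w : w \in B -> w < v -> w \in A.
  move=> Bw lt_wv; apply/negPn/negP=> A'w.
  by have := v_min w; rewrite inE A'w Bw leqNgt lt_wv => /(_ isT).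
have [u /setDP[Au B'u] lt_uv] := lower_exchange lowAB vBA v_min.
have B'A : (u |: (B :\ v)) :\: A = (B :\: A) :\ v.
  apply/setP=> w; rewrite !inE; case: (eqVneq w u) => [->|_]; last by rewrite andbCA.
  by rewrite Au /= andbF.
apply: (IHd (u |: (B :\ v))).
- by move: le_BA_d; rewrite B'A (cardsD1 v (B :\: A)) vBA.
- by rewrite card_AB (cardsD1 v B) Bv cardsU1 !inE negb_and B'u orbT.
- by rewrite B'A; apply: subset_trans sub_T; apply: subD1set.
- exact: lower_exchange_below.
- by apply: closedF => //; apply: (subsetP sub_T).
Qed.

Lemma card_below_count A y :
  card_below A y = count (fun x => x < y) (sorted_elems A).
Proof.
rewrite /card_below /sorted_elems count_sort count_map.
have -> : #|[set w in A | w < y]| = #|[seq w <- enum A | (w : 'I_n) < y]|.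
  by apply: eq_card => w; rewrite !inE mem_filter mem_enum andbC.
by rewrite (card_uniqP _) ?size_filter // filter_uniq // enum_uniq.
Qed.

Lemma size_sorted_elems A : size (sorted_elems A) = #|A|.
Proof. by rewrite /sorted_elems size_sort size_map cardE. Qed.

Lemma shift_prec_card_below A B :
  shift_prec A B -> forall y, card_below B y <= card_below A y.
Proof.
move=> [card_AB le_AB] y; rewrite !card_below_count.
by apply: count_lt_pointwise_le; rewrite ?size_sorted_elems // => t; apply: le_AB.
Qed.

Lemma shift_fixed_initial F :
  (forall i j : 'I_n, i < j -> shift_fam i j F = F) -> initial F.
Proof.
move=> fixF A B precAB FB; have [card_AB _] := precAB.
apply: (@shift_closed_lower F setT _ B) => //; last exact: shift_prec_card_below.
by move=> u v lt_uv _; apply: shift_fam_fixed_mem; apply: fixF.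
Qed.

Lemma nonstar_avoid F (i : 'I_n) :
  ~ is_star F -> exists2 A, A \in F & i \notin A.
Proof.
move=> nstarF; case: (boolP [exists A in F, i \notin A]) => [/exists_inP[A]|].
  by exists A.
rewrite negb_exists_in => /forall_inP inA; case: nstarF; exists i => A FA.
by have := inA A FA; rewrite negbK.
Qed.

Lemma punctured_prefix_mem F T (k : nat) (i : 'I_n) :
  k < n -> i < k.+1 -> uniformly k F -> ~ is_star F -> shift_closed_on F T ->
  (forall w : 'I_n, k < w -> w \in T) -> [set w : 'I_n | w < k.+1] :\ i \in F.
Proof.
move=> lt_kn lt_ik unifF nstarF closedF far_T.
set C := [set w : 'I_n | w < k.+1] :\ i.
have [A FA iA] := nonstar_avoid i nstarF.
have A_neq_i w : w \in A -> w != i by apply: contraTneq => ->.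
have card_C : #|C| = k.
  by have := cardsD1 i [set w : 'I_n | w < k.+1]; rewrite card_prefix // inE lt_ik => -[].
apply: (shift_closed_lower closedF _ _ _ FA); first by rewrite card_C unifF.
  apply/subsetP=> w; rewrite !inE negb_and negbK => /andP[/orP[/eqP-> |]].
    by rewrite (negbTE iA).
  by rewrite -ltnNge => lt_kw _; apply: far_T.
move=> y; rewrite /card_below; have [le_yk|lt_ky] := leqP y k.+1.
  apply: subset_leq_card; apply/subsetP=> w; rewrite !inE => /andP[Aw lt_wy].
  by rewrite A_neq_i // lt_wy (leq_trans lt_wy le_yk).
have -> : [set w in C | w < y] = C.
  apply/setP=> w; rewrite !inE -andbA; congr (_ && _).
  by case: (ltnP w k.+1) => //= lt_wk; apply: ltn_trans lt_wk lt_ky.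
rewrite card_C -(unifF A FA); apply: subset_leq_card; apply/subsetP=> w.
by rewrite inE => /andP[].
Qed.

Lemma ad_extremis_nonedge_fixed F G :
  shifted_ad_extremis F G -> ~ is_star F ->
  forall u v : 'I_n, u < v -> ~~ cover2_edge F u v -> shift_fam u v F = F.
Proof.
move=> adFG nstarF u v lt_uv; case: (adFG u v lt_uv) => [[] //|starS].
by rewrite star_shift_edge // -val_eqE /= neq_ltn lt_uv.
Qed.

Lemma ad_extremis_star_shift F G :
  shifted_ad_extremis F G -> ~ (initial F /\ initial G) ->
  exists i j : 'I_n, i < j /\ is_star (shift_fam i j F).
Proof.
move=> adFG not_init.
have [/existsP[i /existsP[j /andP[lt_ij moves]]]|] :=
  boolP [exists i : 'I_n, exists j : 'I_n,
           (i < j) && ~~ ((shift_fam i j F == F) && (shift_fam i j G == G))].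
  exists i, j; split=> //; case: (adFG i j lt_ij) => // -[fixF fixG].
  by rewrite fixF fixG !eqxx in moves.
rewrite negb_exists => /forallP none; case: not_init.
have fixFG (i j : 'I_n) : i < j -> shift_fam i j F = F /\ shift_fam i j G = G.
  move=> lt_ij; move: (none i); rewrite negb_exists => /forallP/(_ j).
  rewrite lt_ij negbK.
  by case/andP=> /eqP-> /eqP->.
by split; apply: shift_fixed_initial => i j /fixFG[].
Qed.

End Shifting.

Section CoverGraph.
Variables (n : nat) (F : {set {set 'I_n}}).
Local Notation E := (cover2_edge F).

Lemma cover2_edgeC (i j : 'I_n) : E i j = E j i.
Proof.
rewrite /cover2_edge eq_sym; congr (_ && _).
by apply/forall_inP/forall_inP=> cover A FA; rewrite orbC cover.
Qed.

Lemma card_nbhd_le (k : nat) (v : 'I_n) :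
  uniformly k F -> ~ is_star F -> #|[set w | E v w]| <= k.
Proof.
move=> unifF nstarF.
have [A FA vA] := nonstar_avoid v nstarF.
rewrite -(unifF A FA); apply: subset_leq_card; apply/subsetP=> w.
by rewrite inE => /andP[_ /forall_inP/(_ A FA)]; rewrite (negbTE vA).
Qed.

Hypothesis nonedge_fixed : forall u v : 'I_n, u < v -> ~~ E u v -> shift_fam u v F = F.
Hypothesis triF : triangle_free F.

Lemma nonedge_nbhd_shift (i j y : 'I_n) : i < j -> ~~ E i j -> E j y -> E i y.
Proof.
move=> lt_ij nE_ij E_jy; have fixF := shift_fam_fixed_mem (nonedge_fixed lt_ij nE_ij).
have i'y : i != y by apply: contraNneq nE_ij => ->; rewrite cover2_edgeC.
move: (E_jy); rewrite /cover2_edge => /andP[_ /forall_inP cover_jy].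
rewrite i'y; apply/forall_inP=> A FA; apply/negPn/negP; rewrite negb_or => /andP[iA yA].
have jA : j \in A by move: (cover_jy A FA); rewrite (negbTE yA) orbF.
have := cover_jy _ (fixF A FA jA iA).
have j'i : (j == i) = false by rewrite -val_eqE /= gtn_eqF.
by rewrite !inE (negbTE yA) eqxx (eq_sym y i) (negbTE i'y) j'i andbF.
Qed.

Lemma nonedge_nbhd_sub (u v z w : 'I_n) :
  u != v -> ~~ E u v -> E v z -> E u w -> E v w.
Proof.
move=> u'v nE_uv E_vz E_uw; rewrite cover2_edgeC in nE_uv.
have [lt_uv|lt_vu|/val_inj eq_uv] := ltngtP u v; last by rewrite eq_uv eqxx in u'v.
  apply/negPn/negP=> nE_vw.
  have [lt_vw|lt_wv|/val_inj eq_vw] := ltngtP v w.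
  - by rewrite (nonedge_nbhd_shift lt_vw nE_vw) // cover2_edgeC in nE_uv.
  - rewrite cover2_edgeC in nE_vw; rewrite cover2_edgeC in nE_uv.
    have E_wz := nonedge_nbhd_shift lt_wv nE_vw E_vz.
    have E_uz := nonedge_nbhd_shift lt_uv nE_uv E_vz.
    by apply: triF; exists u, w, z.
  - by move: E_uw; rewrite -eq_vw cover2_edgeC (negbTE nE_uv).
exact: nonedge_nbhd_shift lt_vu nE_uv E_uw.
Qed.

Section EdgeNeighbourhoods.
Variables (a b : 'I_n).
Hypothesis E_ab : E a b.
Local Notation X := [set w | E b w].
Local Notation Y := [set w | E a w].

Lemma nbhds_disjoint : [disjoint X & Y].
Proof.
apply/pred0P=> w /=; rewrite !inE; apply/negP=> /andP[E_bw E_aw].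
by apply: triF; exists a, b, w.
Qed.

Lemma edge_end_in_nbhds (i j : 'I_n) : E i j -> i \in X :|: Y.
Proof.
move=> E_ij; rewrite !inE; apply/negPn/negP; rewrite negb_or => /andP[nE_bi nE_ai].
have a'i : a != i by apply: contraNneq nE_bi => <-; rewrite cover2_edgeC.
by rewrite cover2_edgeC (nonedge_nbhd_sub a'i nE_ai E_ij E_ab) in nE_bi.
Qed.

Lemma nbhds_complete (x y : 'I_n) : x \in X -> y \in Y -> E x y.
Proof.
rewrite !inE => E_bx E_ay; have [<- //|a'x] := eqVneq a x.
have nE_ax : ~~ E a x.
  by apply/negP=> E_ax; apply: triF; exists a, b, x.
have E_xb : E x b by rewrite cover2_edgeC.
exact: nonedge_nbhd_sub a'x nE_ax E_xb E_ay.
Qed.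

Lemma nbhds_downward_closed (i j : 'I_n) :
  j \in X :|: Y -> i < j -> i \in X :|: Y.
Proof.
move=> XYj lt_ij; have [z E_jz] : exists z, E j z.
  by move: XYj; rewrite !inE => /orP[] E_j; [exists b | exists a]; rewrite cover2_edgeC.
have [E_ij|nE_ij] := boolP (E i j); first exact: edge_end_in_nbhds E_ij.
exact: edge_end_in_nbhds (nonedge_nbhd_shift lt_ij nE_ij E_jz).
Qed.

Lemma cover2_edge_nbhds (i j : 'I_n) :
  E i j = ((i \in X) && (j \in Y)) || ((i \in Y) && (j \in X)).
Proof.
apply/idP/idP=> [E_ij|/orP[/andP[Xi Yj]|/andP[Yi Xj]]]; last 2 first.
- exact: nbhds_complete.
- by rewrite cover2_edgeC; apply: nbhds_complete.
have E_ji : E j i by rewrite cover2_edgeC.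
move: (edge_end_in_nbhds E_ij) (edge_end_in_nbhds E_ji); rewrite !inE.
case/orP=> [E_bi|E_ai] /orP[E_bj|E_aj]; rewrite ?E_bj ?E_aj ?E_bi ?E_ai ?orbT //.
- by case: triF; exists b, i, j.
- by case: triF; exists a, i, j.
Qed.

Lemma nbhds_card_ge (k : nat) :
  k < n -> uniformly k F -> ~ is_star F -> a < b ->
  (forall A, A \in F -> a \in shift_set a b F A) -> k.+2 <= #|X :|: Y|.
Proof.
move=> lt_kn unifF nstarF lt_ab center; rewrite leqNgt ltnS; apply/negP=> small.
have XY_prefix := downward_closed_prefix nbhds_downward_closed.
have XY_small w : w \in X :|: Y -> w < k.+1.
  by rewrite {1}XY_prefix inE => /leq_trans; apply.
have closed : shift_closed_on F (~: (X :|: Y)).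
  move=> u v lt_uv; rewrite inE => XY'v; apply: shift_fam_fixed_mem.
  have nE_uv : ~~ E u v.
    apply: contraNN XY'v => E_uv.
    by apply: (@edge_end_in_nbhds v u); rewrite cover2_edgeC.
  exact: nonedge_fixed lt_uv nE_uv.
have far (w : 'I_n) : k < w -> w \in ~: (X :|: Y).
  by move=> lt_kw; rewrite inE; apply: contraTN lt_kw => /XY_small; rewrite -leqNgt.
pose C i := [set w : 'I_n | w < k.+1] :\ i.
have FC i : i \in X :|: Y -> C i \in F.
  by move=> /XY_small lt_ik; apply: punctured_prefix_mem closed far.
have XYa : a \in X :|: Y := edge_end_in_nbhds E_ab.
have XYb : b \in X :|: Y by apply: (@edge_end_in_nbhds b a); rewrite cover2_edgeC.
have shift_Ca : a |: (C a :\ b) = C b.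
  apply/setP=> w; rewrite !inE; have [->|//] := eqVneq w a.
  by rewrite XY_small //= andbT -val_eqE /= neq_ltn lt_ab.
have := center _ (FC a XYa).
by rewrite /shift_set shift_Ca FC //= !andbF !inE eqxx.
Qed.

End EdgeNeighbourhoods.
End CoverGraph.

Theorem proposition5p4 (n k l : nat) (F G : {set {set 'I_n}}) :
  k + l < n ->
  uniformly k F -> uniformly l G ->
  nontrivial F -> nontrivial G ->
  cross_intersecting F G ->
  saturated_pair k l F G ->
  shifted_ad_extremis F G ->
  ~ (initial F /\ initial G) ->
  triangle_free F ->
  exists X Y : {set 'I_n},
    [/\ [disjoint X & Y],
        X :|: Y = [set i : 'I_n | i < #|X| + #|Y|],
        2 <= #|X| <= k,
        2 <= #|Y| <= k &
        forall i j : 'I_n, cover2_edge F i j =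
          ((i \in X) && (j \in Y)) || ((i \in Y) && (j \in X))].
Proof.
move=> lt_kln unifF _ [_ nstarF] _ _ _ adFG not_init triF.
have lt_kn : k < n by apply: leq_ltn_trans lt_kln; apply: leq_addr.
have fixF := ad_extremis_nonedge_fixed adFG nstarF.
have [a [b [lt_ab starS]]] := ad_extremis_star_shift adFG not_init.
have center := star_shift_center nstarF starS.
have E_ab : cover2_edge F a b.
  by apply: star_shift_edge nstarF starS; rewrite -val_eqE /= neq_ltn lt_ab.
pose X := [set w | cover2_edge F b w]; pose Y := [set w | cover2_edge F a w].
have card_XY : #|X :|: Y| = #|X| + #|Y|.
  by rewrite cardsU (disjoint_setI0 (nbhds_disjoint triF E_ab)) cards0 subn0.
have big : k.+2 <= #|X| + #|Y|.
  rewrite -card_XY.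
  exact (nbhds_card_ge fixF triF E_ab lt_kn unifF nstarF lt_ab center).
have [le_X le_Y] : #|X| <= k /\ #|Y| <= k by split; apply: card_nbhd_le.
exists X, Y; split.
- exact: nbhds_disjoint.
- by rewrite -card_XY; apply: downward_closed_prefix; apply: nbhds_downward_closed.
- by rewrite le_X andbT -(leq_add2r k) add2n (leq_trans big) // leq_add2l.
- by rewrite le_Y andbT -(leq_add2l k) addn2 (leq_trans big) // leq_add2r.
- exact: cover2_edge_nbhds.
Qed.
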